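(* Let $S \subset \mathbb{R}^2$ be compact such that both $S$ and $S^\mathsf{c}$ satisfy the $r$-rolling condition, and let $\mathcal{X}_n=\{X_1,\ldots,X_n\}$ be independent and uniformly distributed on $S$. For any $\alpha>0$, there is a constant $A > 0$ depending only on $(\alpha,r,\operatorname{diam}(S))$ such that, for every $n\ge1$, with probability at least $1 - A e^{- n/A}$ there is no open ball of radius $\alpha$ with center in $S$ that contains no point of $\mathcal{X}_n$.
   Context: A set $T\subset\mathbb{R}^2$ satisfies the $r$-rolling condition ($r>0$) if for every $x \in \partial T$ there is an open ball $B$ of radius $r$ with $B \cap T = \emptyset$ and $x \in \partial B$. $S^\mathsf{c}=\mathbb{R}^2\setminus S$, $\operatorname{diam}(S)=\sup\{\|x-y\|:x,y\in S\}$. *)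

(* The plane R^2 is modelled as R * R (product
   topology = Euclidean topology, product sigma-algebra = Borel sets), with
   the Euclidean distance written out explicitly. *)
From HB Require Import structures.
From mathcomp Require Import all_boot all_order all_algebra.
From mathcomp Require Import all_classical all_reals all_analysis.
Set Implicit Arguments. Unset Strict Implicit. Unset Printing Implicit Defensive.
Import Order.TTheory GRing.Theory Num.Theory.
Import numFieldTopology.Exports numFieldNormedType.Exports.
Local Open Scope classical_set_scope.
Local Open Scope ring_scope.

Section Plane.
Variable R : realType.

Definition edist (x y : R * R) : R :=
  Num.sqrt ((x.1 - y.1) ^+ 2 + (x.2 - y.2) ^+ 2).

Definition oball (c : R * R) (rho : R) : set (R * R) :=
  [set y | edist c y < rho].

Definition bdry (T : set (R * R)) : set (R * R) :=
  closure T `\` interior T.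

Definition rolling (r : R) (T : set (R * R)) : Prop :=
  forall x, bdry T x ->
    exists c, oball c r `&` T = set0 /\ edist c x = r.

Definition diam (S : set (R * R)) : R :=
  sup [set edist x y | x in S & y in S].

Definition leb2 := ((@lebesgue_measure R) \x (@lebesgue_measure R))%E.

Definition uniform_on d (T : measurableType d) (P : probability T R)
    (X : T -> R * R) (S : set (R * R)) : Prop :=
  forall B : set (R * R), measurable B ->
    (P (X @^-1` B) * leb2 S = leb2 (B `&` S))%E.

Definition indep_pts d (T : measurableType d) (P : probability T R) n
    (X : 'I_n -> T -> R * R) : Prop :=
  forall B : 'I_n -> set (R * R), (forall i, measurable (B i)) ->
    P (\bigcap_(i in [set: 'I_n]) (X i @^-1` B i)) =
    (\prod_(i < n) P (X i @^-1` B i))%E.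

End Plane.

(* Cover S, which lies in a disc of radius diam S, by N^2 squares of side alpha/4.
   Every square meeting S contains a point s of S, and near s there is a ball of
   the fixed radius d = min(alpha/8, r) inside S: either S contains a disc around
   s, or the segment from s to a nearby point outside S crosses the boundary,
   where the rolling ball of S^c (a ball of radius r inside S) touches.  A point
   c of S with no sample within alpha forces the ball attached to the square of c
   to be empty; each sample hits that ball with probability at least
   p = d^2 / (2 (diam S + 1))^2.  The uncovered event is measurable because, by compactness,
   it is a countable intersection of countable unions over rational centres. *)
From Pilot Require Import Defs.
From HB Require Import structures.
From mathcomp Require Import all_boot all_order all_algebra.
From mathcomp Require Import all_classical all_reals all_analysis.
From mathcomp Require Import ring lra measurable_realfun.
Set Implicit Arguments. Unset Strict Implicit. Unset Printing Implicit Defensive.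
Import Order.TTheory GRing.Theory Num.Theory.
Import numFieldTopology.Exports numFieldNormedType.Exports.
Local Open Scope classical_set_scope.
Local Open Scope ring_scope.

Lemma compact_nondecreasing_cover (T : ptopologicalType) (A : set T) (U : nat -> set T) :
  compact A -> (forall k, open (U k)) -> {homo U : k l / (k <= l)%N >-> k `<=` l} ->
  A `<=` \bigcup_k U k -> exists K, A `<=` U K.
Proof.
move=> cA oU U_homo AU; have {}cA : cover_compact A by rewrite -(@compact_cover T).
have [F _ AF] := cA nat setT U (fun k _ => oU k) AU.
exists (\max_(k <- finmap.enum_fset F) k) => z /AF [k /= Fk Ukz].
by apply: U_homo Ukz; exact: leq_bigmax_seq.
Qed.

Section Plane.
Variable R : realType.
Implicit Types (x y z c m s : R * R) (S : set (R * R)).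
(* The library's own [edist] is an extended-real distance. *)
Local Notation edist := (@Defs.edist R).
(* [compact_cover] needs a pointed space, which [R * R] only is through its normed structure. *)
Local Notation plane := ((R * R)%type : normedModType R).

Lemma edist_ge0 x y : 0 <= edist x y. Proof. exact: sqrtr_ge0. Qed.

Lemma edist_sqr x y : edist x y ^+ 2 = (x.1 - y.1) ^+ 2 + (x.2 - y.2) ^+ 2.
Proof. by rewrite /Defs.edist sqr_sqrtr // addr_ge0 // sqr_ge0. Qed.

Lemma edistxx x : edist x x = 0.
Proof. by rewrite /Defs.edist !subrr expr0n /= addr0 sqrtr0. Qed.

Lemma edistC x y : edist x y = edist y x.
Proof. by rewrite /Defs.edist -(sqrrN (x.1 - y.1)) -(sqrrN (x.2 - y.2)) !opprB. Qed.

Lemma edist_eq_sqr x y e : 0 <= e -> edist x y ^+ 2 = e ^+ 2 -> edist x y = e.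
Proof. by move=> e0 h; apply/eqP; rewrite -(eqrXn2 (isT : (0 < 2)%N)) ?edist_ge0 // h. Qed.

Lemma edist_triangle x y z : edist x z <= edist x y + edist y z.
Proof.
rewrite -(ler_pXn2r (isT : (0 < 2)%N)) ?nnegrE ?addr_ge0 ?edist_ge0 //.
have g1 := edist_ge0 x y; have g2 := edist_ge0 y z.
have h1 := edist_sqr x y; have h2 := edist_sqr y z.
set a := edist x y in g1 h1 *; set b := edist y z in g2 h2 *.
set u1 := x.1 - y.1 in h1; set u2 := x.2 - y.2 in h1.
set v1 := y.1 - z.1 in h2; set v2 := y.2 - z.2 in h2.
have -> : edist x z ^+ 2 = (u1 + v1) ^+ 2 + (u2 + v2) ^+ 2.
  by rewrite edist_sqr /u1 /u2 /v1 /v2; congr (_ ^+ 2 + _ ^+ 2); ring.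
(* Cauchy-Schwarz, via Lagrange's identity *)
have cs : (u1 * v1 + u2 * v2) ^+ 2 <= (a * b) ^+ 2.
  rewrite exprMn h1 h2 -subr_ge0.
  have -> : (u1 ^+ 2 + u2 ^+ 2) * (v1 ^+ 2 + v2 ^+ 2) - (u1 * v1 + u2 * v2) ^+ 2
     = (u1 * v2 - u2 * v1) ^+ 2 by ring.
  exact: sqr_ge0.
have ab0 : 0 <= a * b by exact: mulr_ge0.
have : u1 * v1 + u2 * v2 <= a * b by rewrite leNgt; apply/negP => ?; nra.
nra.
Qed.

Lemma normB1_le_edist x y : `|x.1 - y.1| <= edist x y.
Proof.
rewrite -(ler_pXn2r (isT : (0 < 2)%N)) ?nnegrE ?edist_ge0 //.
by rewrite edist_sqr real_normK ?num_real // lerDl sqr_ge0.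
Qed.

Lemma normB2_le_edist x y : `|x.2 - y.2| <= edist x y.
Proof.
rewrite -(ler_pXn2r (isT : (0 < 2)%N)) ?nnegrE ?edist_ge0 //.
by rewrite edist_sqr (real_normK (num_real _)) lerDr sqr_ge0.
Qed.

Lemma edist_lt_ball x y e : edist x y < e -> ball x e y.
Proof.
by move=> h; split; apply: le_lt_trans h;
  [exact: normB1_le_edist | exact: normB2_le_edist].
Qed.

Lemma ball_edist_lt x y e : ball x e y -> edist x y < 2 * e.
Proof.
move=> [h1 h2]; have e0 : 0 < e by apply: le_lt_trans h1.
have q1 : (x.1 - y.1) ^+ 2 < e ^+ 2.
  by rewrite -(real_normK (num_real (x.1 - y.1))) ltr_pXn2r ?nnegrE ?normr_ge0 ?(ltW e0).
have q2 : (x.2 - y.2) ^+ 2 < e ^+ 2.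
  by rewrite -(real_normK (num_real (x.2 - y.2))) ltr_pXn2r ?nnegrE ?normr_ge0 ?(ltW e0).
have := edist_sqr x y; have := edist_ge0 x y.
nra.
Qed.

Definition seg x y (t : R) : R * R := (x.1 + t * (y.1 - x.1), x.2 + t * (y.2 - x.2)).

Lemma seg0 x y : seg x y 0 = x.
Proof. by rewrite /seg !mul0r !addr0; case: x. Qed.

Lemma seg1 x y : seg x y 1 = y.
Proof. by rewrite /seg !mul1r !(addrC x.1, addrC x.2) !subrK; case: y. Qed.

Lemma edist_seg_l x y t : 0 <= t -> edist x (seg x y t) = t * edist x y.
Proof.
move=> t0; apply: edist_eq_sqr; first by rewrite mulr_ge0 ?edist_ge0.
by rewrite exprMn !edist_sqr /seg /=; ring.
Qed.

Lemma edist_seg_r x y t : t <= 1 -> edist (seg x y t) y = (1 - t) * edist x y.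
Proof.
move=> t1; apply: edist_eq_sqr; first by rewrite mulr_ge0 ?subr_ge0 ?edist_ge0.
by rewrite exprMn !edist_sqr /seg /=; ring.
Qed.

Lemma ball_seg x y t u e :
  `|t - u| * (edist x y + 1) < e -> ball (seg x y t) e (seg x y u).
Proof.
move=> h; split; apply: le_lt_trans h; rewrite /seg /= opprD addrACA subrr add0r
  -mulrBl normrM ler_wpM2l // -[X in X <= _]addr0 edistC lerD //;
  first [exact: normB1_le_edist | exact: normB2_le_edist].
Qed.

Lemma bdry_on_segment (A : set (R * R)) x y :
  ~ A x -> A y -> exists2 t, 0 <= t <= 1 & bdry A (seg x y t).
Proof.
move=> nAx Ay; pose L := edist x y + 1.
have L0 : 0 < L by rewrite ltr_wpDl ?edist_ge0.
pose B := [set t : R | 0 <= t <= 1 /\ ~ A (seg x y t)].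
have B0 : B 0 by split; [rewrite lexx ler01 | rewrite seg0].
have hB : has_sup B by split; [exists 0 | exists 1 => t [/andP[_ ->]]].
have ts0 : 0 <= sup B := sup_upper_bound hB B0.
have ts1 : sup B <= 1 by apply: ge_sup => [|t [/andP[_ ->]]]; first by exists 0.
exists (sup B); first by rewrite ts0 ts1.
have near_sup t e : `|sup B - t| < e / L -> ball (seg x y (sup B)) e (seg x y t).
  by move=> h; apply: ball_seg; rewrite -ltr_pdivlMr.
split.
- move=> U /nbhs_ballP [e e0 eU].
  have [ts_eq1|ts_neq1] := eqVneq (sup B) 1.
    by exists y; split => //; apply: eU; rewrite ts_eq1 seg1; exact: ballxx.
  pose t := sup B + Num.min (1 - sup B) (e / L) / 2.
  have m0 : 0 < Num.min (1 - sup B) (e / L).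
    by rewrite lt_min subr_gt0 lt_neqAle ts_neq1 ts1 divr_gt0.
  have [m1 m2] : Num.min (1 - sup B) (e / L) <= 1 - sup B /\
                 Num.min (1 - sup B) (e / L) <= e / L by rewrite !ge_min !lexx orbT.
  exists (seg x y t); split.
    apply: contrapT => nAt.
    have : t <= sup B by apply: sup_upper_bound => //; split => //; rewrite /t; lra.
    rewrite /t; lra.
  apply: eU; apply: near_sup; rewrite /t opprD addrA subrr add0r normrN gtr0_norm; lra.
- move=> /nbhs_ballP [e e0 eU].
  have eL0 : 0 < e / L by rewrite divr_gt0.
  have [t [/andP[t0 t1] nAt] tgt] := sup_adherent eL0 hB.
  have tle : t <= sup B by apply: sup_upper_bound => //; split => //; apply/andP.
  by apply: nAt; apply: eU; apply: near_sup; rewrite ger0_norm; lra.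
Qed.

Lemma rolling_compl_inner_ball S r d x :
  rolling r (~` S) -> bdry (~` S) x -> 0 < d <= r ->
  exists m, edist x m = d /\ oball m d `<=` S.
Proof.
move=> roll bx /andP[d0 dr]; have r0 : 0 < r by apply: lt_le_trans dr.
have [c [disj cx]] := roll x bx.
have inS z : edist c z < r -> S z.
  by move=> cz; apply: contrapT => nSz; have : (oball c r `&` ~` S) z by []; rewrite disj.
have t0 : 0 <= d / r := divr_ge0 (ltW d0) (ltW r0).
have t1 : d / r <= 1 by rewrite ler_pdivrMr // mul1r.
exists (seg x c (d / r)); split; first by rewrite edist_seg_l // edistC cx divfK ?gt_eqF.
move=> z mz; apply: inS; apply: le_lt_trans (edist_triangle _ (seg x c (d / r)) _) _.
rewrite edistC edist_seg_r // edistC cx mulrBl mul1r divfK ?gt_eqF //.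
by move: mz; rewrite /oball /=; lra.
Qed.

Lemma compl_rolling_inner_ball S r rho d s :
  rolling r (~` S) -> 0 < d <= r -> 4 * d <= rho -> S s ->
  exists m, oball m d `<=` S `&` oball s rho.
Proof.
move=> roll dr drho Ss; have d0 : 0 < d by case/andP: dr.
have [sub|] := pselect (oball s (rho / 2) `<=` S).
  by exists s => z; rewrite /oball /= => sz; split; [apply: sub; rewrite /oball /=|]; lra.
move=> /existsNP [y /not_implyP [sy nSy]].
have [t /andP[t0 t1] bx] := bdry_on_segment (A := ~` S) (fun nSs => nSs Ss) nSy.
have sx : edist s (seg s y t) < rho / 2.
  by rewrite edist_seg_l //; apply: le_lt_trans sy; rewrite ler_piMl ?edist_ge0.
have [m [xm mS]] := rolling_compl_inner_ball roll bx dr.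
exists m => z mz; split; first exact: mS.
move: mz; rewrite /oball /= => mz.
have := edist_triangle s (seg s y t) z; have := edist_triangle (seg s y t) m z; lra.
Qed.

Lemma open_oball c e : open (oball c e).
Proof.
rewrite openE => z; rewrite /oball /= => cz; apply/nbhs_ballP.
exists ((e - edist c z) / 2); first by rewrite /= divr_gt0 // subr_gt0.
move=> y /ball_edist_lt zy; rewrite /oball /=.
by have := edist_triangle c z y; lra.
Qed.

Lemma edist_le_diam S x y : compact S -> S x -> S y -> edist x y <= diam S.
Proof.
move=> cS Sx Sy; apply: sup_upper_bound; last by exists x => //; exists y.
split; first by exists (edist x x); exists x => //; exists x.
have [K SK] : exists K, S `<=` oball x K%:R.
  apply: (@compact_nondecreasing_cover plane S (fun k => oball x k%:R)) => //.
  - by move=> k; exact: open_oball.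
  - by move=> k l kl z /= xz; apply: lt_le_trans xz _; rewrite ler_nat.
  - move=> z _; exists (Num.truncn (edist x z)).+1 => //=.
    by have /andP[] := truncn_itv (edist_ge0 x z).
exists (K%:R + K%:R) => _ [a Sa [b Sb <-]].
have := SK _ Sa; have := SK _ Sb; have := edist_triangle a x b.
by rewrite /oball /= (edistC a x); lra.
Qed.

Definition ratp (q : rat * rat) : R * R := (ratr q.1, ratr q.2).

Lemma ratp_near z e : 0 < e -> exists q, edist (ratp q) z < e.
Proof.
move=> e0; have e2 : 0 < e / 2 by rewrite divr_gt0.
have near_rat (a : R) : exists q : rat, `|ratr q - a| < e / 2.
  have [q] := @rat_in_itvoo R (a - e / 2) (a + e / 2) ltac:(lra).
  by rewrite in_itv /= => /andP[q1 q2]; exists q; rewrite ltr_norml; apply/andP; split; lra.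
have [q1 h1] := near_rat z.1; have [q2 h2] := near_rat z.2.
by exists (q1, q2); have := @ball_edist_lt (ratp (q1, q2)) z (e / 2) (conj h1 h2); lra.
Qed.

Definition inv_succ (k : nat) : R := k.+1%:R^-1.

Lemma inv_succ_gt0 k : 0 < inv_succ k. Proof. by rewrite invr_gt0. Qed.

Lemma inv_succ_lt e : 0 < e -> exists k, inv_succ k < e.
Proof.
move=> e0; have ei : 0 <= e^-1 by rewrite invr_ge0 (ltW e0).
exists (Num.truncn e^-1); have /andP[_ h] := truncn_itv ei.
by rewrite /inv_succ -[X in _ < X]invrK ltf_pV2 ?posrE ?invr_gt0 ?ltr0n.
Qed.

Lemma inv_succ_le k l : (k <= l)%N -> inv_succ l <= inv_succ k.
Proof. by move=> kl; rewrite lef_pV2 ?posrE ?ltr0n // ler_nat. Qed.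

Lemma ball_planeE m e : ball m e = ball m.1 e `*` ball m.2 e.
Proof. by apply/seteqP; split => z []. Qed.

Lemma measurable_ball_plane m e : measurable (ball m e).
Proof. by rewrite ball_planeE; apply: measurableX; exact: measurable_ball. Qed.

Lemma measurable_countable_approx d (T : measurableType d) (A : set (R * R))
    (F : nat -> rat * rat -> set T) :
  (forall k q, measurable (F k q)) ->
  measurable (\bigcap_k \bigcup_(q in [set q | exists2 s, A s & edist (ratp q) s < inv_succ k])
    F k q).
Proof.
move=> mF; apply: bigcapT_measurable => k; rewrite bigcup_mkcond.
apply: countable_bigcupT_measurable; first exact: countableP.
by move=> q; case: ifP => _; [exact: mF | exact: measurable0].
Qed.

Lemma closed_measurable_plane S : closed S -> measurable S.
Proof.
move=> cS; suff -> : S = \bigcap_k \bigcup_(q in [set q | exists2 s, S s &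
    edist (ratp q) s < inv_succ k]) ball (ratp q) (inv_succ k).
  by apply: measurable_countable_approx => k q; exact: measurable_ball_plane.
apply/seteqP; split => [z Sz k _ | z Sz].
  have [q qz] := ratp_near z (inv_succ_gt0 k).
  by exists q; [exists z | exact: edist_lt_ball].
apply: contrapT => nSz.
have /nbhs_ballP [e e0 eS] : nbhs z (~` S) by apply: (closed_openC cS).
have [k ke] := inv_succ_lt (divr_gt0 e0 (ltr0n _ 3) : 0 < e / 3).
have [q [s Ss qs] /ball_edist_lt qz] := Sz k I.
apply: (eS s) => //; apply: edist_lt_ball.
by have := edist_triangle z (ratp q) s; rewrite (edistC z (ratp q)); lra.
Qed.

Lemma leb2_ball m e : 0 <= e -> leb2 (ball m e) = ((e *+ 2) ^+ 2)%:E.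
Proof.
move=> e0; rewrite ball_planeE /leb2 product_measure1E; try exact: measurable_ball.
by rewrite expr2 EFinM; congr (_ * _)%E; exact: lebesgue_measure_ball.
Qed.

Lemma compact_measurable_plane S : compact S -> measurable S.
Proof.
move=> cS; apply: closed_measurable_plane.
exact: compact_closed (@norm_hausdorff _ plane) cS.
Qed.

Lemma leb2_le_diam S s D : compact S -> S s -> diam S <= D ->
  (leb2 S <= (((D + 1) *+ 2) ^+ 2)%:E)%E.
Proof.
move=> cS Ss SD; have sD z : S z -> edist s z <= D.
  by move=> Sz; apply: le_trans SD; exact: edist_le_diam.
have D0 : 0 <= D by have := sD s Ss; rewrite edistxx.
rewrite -(leb2_ball s) ?addr_ge0 //; apply: le_measure; rewrite ?inE.
- exact: compact_measurable_plane.
- exact: measurable_ball_plane.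
by move=> z Sz; apply: edist_lt_ball; have := sD z Sz; lra.
Qed.

Lemma open_far p b : open [set z | b < edist p z].
Proof.
rewrite openE => z /= bz; apply/nbhs_ballP.
exists ((edist p z - b) / 2); first by rewrite /= divr_gt0 // subr_gt0.
move=> y /ball_edist_lt zy /=.
by have := edist_triangle p y z; rewrite (edistC y z); lra.
Qed.

Lemma measurable_far_from d (T : measurableType d) n (X : 'I_n -> T -> R * R) p b :
  (forall i, measurable_fun setT (X i)) ->
  measurable [set w | forall i, b < edist p (X i w)].
Proof.
move=> mX; have -> : [set w | forall i, b < edist p (X i w)] =
    \bigcap_(i in setT) (X i @^-1` [set z | b < edist p z]).
  by apply/seteqP; split => [w h i _ | w h i]; [exact: h | exact: h].
apply: fin_bigcap_measurable; first exact: finite_finset.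
move=> i _; rewrite -[X in measurable X]setTI; apply: mX => //.
rewrite -[X in measurable X]setCK; apply: measurableC; apply: closed_measurable_plane.
exact/open_closedC/open_far.
Qed.

Lemma compact_far_point S n (x : 'I_n -> R * R) alpha : compact S ->
  (forall e, 0 < e -> exists2 s, S s & forall i, alpha - e < edist s (x i)) ->
  exists2 c, S c & forall i, alpha <= edist c (x i).
Proof.
move=> cS far; apply: contrapT => nfar.
pose U k := \bigcup_(i in setT) oball (x i) (alpha - inv_succ k).
have [K SK] : exists K, S `<=` U K.
  apply: (@compact_nondecreasing_cover plane S U) => //.
  - by move=> k; apply: bigcup_open => i _; exact: open_oball.
  - move=> k l kl z [i _ iz]; exists i => //; apply: lt_le_trans iz _.
    by rewrite lerD2l lerN2 inv_succ_le.
  - move=> z Sz; have [i iz] : exists i, edist (x i) z < alpha.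
      apply: contrapT => nz; apply: nfar; exists z => // i.
      by rewrite leNgt edistC; apply/negP => iz; apply: nz; exists i.
    have [k kz] : exists k, inv_succ k < alpha - edist (x i) z.
      by apply: inv_succ_lt; rewrite subr_gt0.
    by exists k => //; exists i => //; rewrite /oball /=; lra.
have [s Ss sfar] := far _ (inv_succ_gt0 K).
have [i _] := SK s Ss; rewrite /oball /= edistC.
by have := sfar i; lra.
Qed.

Lemma measurable_covered d (T : measurableType d) n (X : 'I_n -> T -> R * R) S alpha :
  compact S -> (forall i, measurable_fun setT (X i)) ->
  measurable [set w : T | ~ (exists c, S c /\ forall i, ~ oball c alpha (X i w))].
Proof.
move=> cS mX.
suff : measurable [set w | exists c, S c /\ forall i, ~ oball c alpha (X i w)].
  exact: measurableC.
suff -> : [set w | exists c, S c /\ forall i, ~ oball c alpha (X i w)] =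
    \bigcap_k \bigcup_(q in [set q | exists2 s, S s & edist (ratp q) s < inv_succ k])
      [set w | forall i, alpha - 2 * inv_succ k < edist (ratp q) (X i w)].
  by apply: measurable_countable_approx => k q; exact: measurable_far_from.
apply/seteqP; split => [w [c [Sc cfar]] k _ | w wfar].
  have [q qc] := ratp_near c (inv_succ_gt0 k).
  exists q; first by exists c.
  move=> i /=; have : alpha <= edist c (X i w) by rewrite leNgt; apply/negP => ?; exact: (cfar i).
  have := edist_triangle c (ratp q) (X i w); rewrite (edistC c (ratp q)).
  by have := inv_succ_gt0 k; lra.
have [c Sc cfar] : exists2 c, S c & forall i, alpha <= edist c (X i w).
  apply: compact_far_point => // e e0.
  have [k ke] := inv_succ_lt (divr_gt0 e0 (ltr0n _ 3) : 0 < e / 3).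
  have [q [s Ss qs] qfar] := wfar k I.
  exists s => // i; have := qfar i; have := edist_triangle (ratp q) s (X i w).
  by have := inv_succ_gt0 k; lra.
by exists c; split => // i; rewrite /oball /= ltNge cfar.
Qed.


Definition grid_size (D h : R) : nat := (Num.truncn (D *+ 2 / h)).+1.

Lemma grid_cells c0 D h : 0 < h -> exists idx : R * R -> nat,
  (forall c, edist c0 c <= D -> (idx c < grid_size D h ^ 2)%N) /\
  (forall c s, edist c0 c <= D -> edist c0 s <= D -> idx c = idx s -> edist c s < 2 * h).
Proof.
move=> h0; pose N := grid_size D h; pose cell (a : R) := Num.truncn ((a + D) / h).
have cell_ge0 a : `|a| <= D -> 0 <= (a + D) / h.
  by rewrite ler_norml => /andP[aD _]; rewrite divr_ge0 ?(ltW h0) //; lra.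
have cell_lt a : `|a| <= D -> (cell a < N)%N.
  move=> aD; rewrite ltnS le_truncn // ler_pM2r ?invr_gt0 // mulr2n lerD2r.
  by apply: le_trans aD; exact: ler_norm.
have cell_close a b : `|a| <= D -> `|b| <= D -> cell a = cell b -> `|a - b| < h.
  move=> aD bD ab; have /andP[a1 a2] := truncn_itv (cell_ge0 a aD).
  have /andP[b1 b2] := truncn_itv (cell_ge0 b bD).
  rewrite -/(cell a) ab in a1 a2; rewrite -/(cell b) in b1 b2.
  rewrite -natr1 in a2 b2.
  have -> : a - b = ((a + D) / h - (b + D) / h) * h by rewrite mulrBl !divfK ?gt_eqF //; ring.
  rewrite normrM (gtr0_norm h0) -[X in _ < X]mul1r ltr_pM2r // ltr_norml.
  by apply/andP; split; lra.
have coord c : edist c0 c <= D -> `|c.1 - c0.1| <= D /\ `|c.2 - c0.2| <= D.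
  by move=> cD; split; rewrite distrC; apply: le_trans cD;
    [exact: normB1_le_edist | exact: normB2_le_edist].
pose i1 c := cell (c.1 - c0.1); pose i2 c := cell (c.2 - c0.2).
exists (fun c => i1 c * N + i2 c)%N; split.
  move=> c /coord [/cell_lt c1 /cell_lt c2].
  rewrite expnS expn1 (leq_trans (_ : _ < i1 c * N + N)%N) ?ltn_add2l //.
  by rewrite -mulSnr leq_mul2r c1 orbT.
move=> c s /coord [c1 c2] /coord [s1 s2] cs; apply: ball_edist_lt.
have [e1 e2] : i1 c = i1 s /\ i2 c = i2 s.
  have divE a b : (b < N)%N -> ((a * N + b) %/ N = a)%N.
    by move=> bN; rewrite divnMDl // divn_small // addn0.
  have modE a b : (b < N)%N -> ((a * N + b) %% N = b)%N.
    by move=> bN; rewrite modnMDl modn_small.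
  split; [have := congr1 (divn^~ N) cs | have := congr1 (modn^~ N) cs];
    by rewrite /= ?divE ?modE ?cell_lt.
have := cell_close _ _ c1 s1 e1; have := cell_close _ _ c2 s2 e2.
have subB (a b x : R) : a - x - (b - x) = a - b by ring.
by rewrite !subB => ? ?; split.
Qed.

Lemma cell_inner_balls S r alpha d (idx : R * R -> nat) s0 :
  rolling r (~` S) -> 0 < d <= r -> 8 * d <= alpha -> S s0 ->
  (forall c s, S c -> S s -> idx c = idx s -> edist c s < alpha / 2) ->
  exists m : nat -> R * R, forall k, ball (m k) (d / 2) `<=` S /\
    forall c, S c -> idx c = k -> ball (m k) (d / 2) `<=` oball c alpha.
Proof.
move=> roll dr da Ss0 close.
suff /choice [m hm] : forall k, exists m, ball m (d / 2) `<=` S /\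
  forall c, S c -> idx c = k -> ball m (d / 2) `<=` oball c alpha by exists m.
move=> k.
have [s Ss near_s] : exists2 s, S s & forall c, S c -> idx c = k -> edist c s < alpha / 2.
  have [[s [Ss sk]] | nocell] := pselect (exists s, S s /\ idx s = k).
    by exists s => // c Sc ck; apply: close; rewrite ?sk.
  by exists s0 => // c Sc ck; exfalso; apply: nocell; exists c.
have da2 : 4 * d <= alpha / 2 by lra.
have [m mS] := compl_rolling_inner_ball roll dr da2 Ss.
have ball_oball z : ball m (d / 2) z -> oball m d z.
  by move=> /ball_edist_lt mz; rewrite /oball /=; lra.
exists m; split => [z /ball_oball /mS [] // | c Sc ck z /ball_oball /mS [_]].
rewrite /oball /= => sz; have := near_s c Sc ck; have := edist_triangle c s z; lra.
Qed.

Lemma uncovered_cells S r alpha d D s0 :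
  compact S -> rolling r (~` S) -> S s0 -> diam S <= D -> 0 < d <= r -> 8 * d <= alpha ->
  exists m : nat -> R * R, (forall k, ball (m k) (d / 2) `<=` S) /\
    forall c, S c -> exists2 k, (k < grid_size D (alpha / 4) ^ 2)%N &
      ball (m k) (d / 2) `<=` oball c alpha.
Proof.
move=> cS roll Ss0 SD dr da; have a4 : 0 < alpha / 4 by case/andP: dr => d0 _; lra.
have sD c : S c -> edist s0 c <= D.
  by move=> Sc; apply: le_trans SD; exact: edist_le_diam.
have [idx [idxM idx_close]] := grid_cells s0 D a4.
have close c s : S c -> S s -> idx c = idx s -> edist c s < alpha / 2.
  by move=> Sc Ss cs; have := idx_close c s (sD c Sc) (sD s Ss) cs; lra.
have [m hm] := cell_inner_balls roll dr da Ss0 close.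
exists m; split => [k | c Sc]; first exact: (hm k).1.
by exists (idx c); [exact: idxM (sD c Sc) | exact: (hm (idx c)).2 c Sc erefl].
Qed.

Lemma measurable_avoid d (T : measurableType d) n (X : 'I_n -> T -> R * R) G :
  (forall i, measurable_fun setT (X i)) -> measurable G ->
  measurable (\bigcap_(i in setT) X i @^-1` ~` G).
Proof.
move=> mX mG; apply: fin_bigcap_measurable; first exact: finite_finset.
move=> i _; rewrite -[X in measurable X]setTI; apply: mX => //.
exact: measurableC.
Qed.

Lemma prob_all_avoid_le d (T : measurableType d) (P : probability T R) n
    (X : 'I_n -> T -> R * R) S G (q l : R) :
  (forall i, measurable_fun setT (X i)) -> indep_pts P X ->
  (forall i, uniform_on P (X i) S) ->
  measurable S -> measurable G -> G `<=` S -> 0 < q ->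
  (q%:E <= leb2 G)%E -> (leb2 S <= l%:E)%E ->
  (P (\bigcap_(i in setT) X i @^-1` ~` G) <= (expR (- (q / l) * n%:R))%:E)%E.
Proof.
move=> mX indep unif mS mG GS q0 qG Sl.
have mpre i B : measurable B -> measurable (X i @^-1` B).
  by move=> mB; rewrite -[X in measurable X]setTI; exact: mX.
have GSle : (leb2 G <= leb2 S)%E by apply: le_measure; rewrite ?inE.
have Sfin : leb2 S \is a fin_num.
  by rewrite ge0_fin_numE ?measure_ge0 //; apply: le_lt_trans Sl _; exact: ltry.
have Gfin : leb2 G \is a fin_num.
  rewrite ge0_fin_numE ?measure_ge0 //; apply: le_lt_trans GSle _.
  by rewrite -ge0_fin_numE ?measure_ge0.
have qSl : q <= fine (leb2 S) <= l.
  by rewrite -!lee_fin fineK //; apply/andP; split => //; exact: le_trans GSle.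
have ql1 : q / l <= 1 by rewrite ler_pdivrMr ?mul1r; case/andP: qSl => ? ?; lra.
pose x i := fine (P (X i @^-1` G)).
have Pfin i : P (X i @^-1` G) \is a fin_num by apply: fin_num_measure; exact: mpre.
have x_bounds i : q / l <= x i <= 1.
  apply/andP; split; last by rewrite -lee_fin fineK //; apply: probability_le1; exact: mpre.
  have xS : x i * fine (leb2 S) = fine (leb2 G).
    by apply: EFin_inj; rewrite EFinM /x !fineK // -[in RHS](setIidl GS); exact: unif.
  have x0 : 0 <= x i by rewrite fine_ge0 ?measure_ge0.
  have qG' : q <= fine (leb2 G) by rewrite -lee_fin fineK.
  rewrite ler_pdivrMr; last by case/andP: qSl => ? ?; lra.
  apply: le_trans qG' _; rewrite -xS; apply: (ler_wpM2l x0); by case/andP: qSl.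
have compl i : P (X i @^-1` ~` G) = (1 - x i)%:E.
  rewrite -preimage_setC probability_setC; last exact: mpre.
  by rewrite EFinB /x fineK.
rewrite (indep (fun _ => ~` G)); last by move=> i; apply: measurableC.
rewrite (eq_bigr _ (fun i _ => compl i)) prodEFin lee_fin.
apply: le_trans (_ : \prod_(i < n) (1 - q / l) <= _).
  by apply: ler_prod => i _; have /andP[? ?] := x_bounds i; apply/andP; split; lra.
rewrite prodr_const card_ord [_ * n%:R]mulrC expRM_natl.
apply: lerXn2r; rewrite ?nnegrE ?expR_ge0 ?subr_ge0 //.
by have := expR_ge1Dx (- (q / l)); lra.
Qed.

Lemma probability_ge_of_cover d (T : measurableType d) (P : probability T R) E
    (F : nat -> set T) M b :
  measurable E -> (forall k, measurable (F k)) ->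
  ~` E `<=` \big[setU/set0]_(k < M) F k -> (forall k, (P (F k) <= b%:E)%E) ->
  ((1 - M%:R * b)%:E <= P E)%E.
Proof.
move=> mE mF EF Fb.
have PEc : (P (~` E) <= (M%:R * b)%:E)%E.
  apply: le_trans (@content_subadditive _ _ _ P _ _ _ (fun k _ => mF k) (measurableC mE) EF) _.
  apply: le_trans (_ : (\sum_(k < M) b%:E <= _)%E); first by apply: lee_sum => k _; exact: Fb.
  by rewrite sumEFin lee_fin sumr_const card_ord mulr_natl.
have Pfin : P (~` E) \is a fin_num by apply: fin_num_measure; exact: measurableC.
rewrite -[E]setCK probability_setC; last exact: measurableC.
by rewrite -(fineK Pfin) -EFinB lee_fin lerD2l lerN2 -lee_fin fineK.
Qed.

Lemma mul_expR_le (M p x : R) : 0 <= M -> 0 < p -> 0 <= x ->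
  M * expR (- p * x) <= (M + p^-1) * expR (- x / (M + p^-1)).
Proof.
move=> M0 p0 x0; have A0 : 0 < M + p^-1 by rewrite ltr_wpDl ?invr_gt0.
apply: ler_pM => //; first by rewrite lerDl invr_ge0 (ltW p0).
rewrite ler_expR !mulNr lerN2 [p * x]mulrC; apply: (ler_wpM2l x0).
by rewrite -[X in _ <= X]invrK lef_pV2 ?posrE ?invr_gt0 // lerDr.
Qed.
End Plane.

Unset Implicit Arguments.
Set Strict Implicit.

Theorem proposition1 (R : realType) (alpha r D : R) :
  0 < alpha -> 0 < r ->
  exists A : R, 0 < A /\
    forall S : set (R * R),
      compact S -> S !=set0 ->
      rolling r S -> rolling r (~` S) -> diam S = D ->
      forall n : nat, (0 < n)%N ->
      forall (d : measure_display) (T : measurableType d)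
             (P : probability T R) (X : 'I_n -> T -> R * R),
        (forall i, measurable_fun setT (X i)) ->
        indep_pts P X ->
        (forall i, uniform_on P (X i) S) ->
        let E := [set w : T | ~ (exists c, S c /\
                     forall i, ~ oball c alpha (X i w))] in
        measurable E /\
        ((1 - A * expR (- (n%:R) / A))%:E <= P E)%E.
Proof.
move=> a0 r0; pose d := Num.min (alpha / 8) r; pose L := ((`|D| + 1) *+ 2) ^+ 2.
have d0 : 0 < d by rewrite lt_min r0 andbT divr_gt0.
have dr : 0 < d <= r by rewrite d0 ge_min lexx orbT.
have da : 8 * d <= alpha by rewrite mulrC -ler_pdivlMr // /d ge_min lexx.
pose M := (grid_size `|D| (alpha / 4) ^ 2)%N; pose p := d ^+ 2 / L.
have p0 : 0 < p by rewrite divr_gt0 ?exprn_gt0 // pmulrn_lgt0 // ltr_wpDl.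
exists (M%:R + p^-1); split; first by rewrite ltr_wpDl ?invr_gt0.
move=> S cS [s0 Ss0] _ rollSc diamS n _ dd T P X mX indep unif E.
split; first exact: measurable_covered.
have SD : diam S <= `|D| by rewrite diamS ler_norm.
have [m [mS mcover]] := uncovered_cells cS rollSc Ss0 SD dr da.
pose F k := \bigcap_(i in setT) X i @^-1` ~` ball (m k) (d / 2).
apply: le_trans (@probability_ge_of_cover _ _ _ P E F M (expR (- p * n%:R)) _ _ _ _).
- by rewrite lee_fin lerD2l lerN2; apply: mul_expR_le; rewrite ?ler0n.
- exact: measurable_covered.
- by move=> k; apply: measurable_avoid => //; exact: measurable_ball_plane.
- move=> w /contrapT [c [Sc cfar]]; have [k kM kc] := mcover c Sc.
  by rewrite -bigcup_mkord; exists k => // i _ /= Gi; apply: (cfar i); exact: kc.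
move=> k; apply: prob_all_avoid_le => //.
- exact: compact_measurable_plane.
- exact: measurable_ball_plane.
- by rewrite exprn_gt0.
- by rewrite leb2_ball ?(divr_ge0 (ltW d0)) // mulr2n -splitr.
exact: leb2_le_diam cS Ss0 SD.
Qed.
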